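(* For every $n$ there is an instance of $P2\|C_{\max}$ with $3n+1$ jobs and an initial schedule from which a sequence of improving 3-swaps, each interchanging exactly three jobs between the two machines, has length $2^{\Omega(n)}$ before a 3-swap optimal solution is reached; i.e., the number of improving 3-swaps until a 3-swap optimal solution is reached can be $2^{\Omega(n)}$.
   Context: Problem $P2\|C_{\max}$: jobs with processing times $p_j>0$, two identical machines. A schedule $\sigma=(M_1,M_2)$ partitions the jobs into the sets processed on machines 1 and 2; loads $L_i=\sum_{j\in M_i}p_j$, makespan $\max_iL_i$. A 3-swap (in this statement) chooses $k'$ jobs on one machine and $k''$ jobs on the other with $k'+k''=3$ and interchanges their machine assignments; it is improving if the makespan strictly decreases. A 3-swap optimal solution is a schedule admitting no improving 3-swap. *)

From mathcomp Require Import all_boot.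
Set Implicit Arguments. Unset Strict Implicit. Unset Printing Implicit Defensive.

Section P2.
Variable J : finType.
Variable p : J -> nat.

(* A schedule assigns each job to machine 1 ([true]) or machine 2 ([false]). *)
Definition schedule := {ffun J -> bool}.

Definition load (s : schedule) (m : bool) : nat := \sum_(j | s j == m) p j.

Definition makespan (s : schedule) : nat := maxn (load s true) (load s false).

Definition swap (s : schedule) (S : {set J}) : schedule :=
  [ffun j => if j \in S then ~~ s j else s j].

(* s' is obtained from s by an improving 3-swap: exactly three jobs change
   machine (k' on one machine, k'' on the other, k' + k'' = 3) and the
   makespan strictly decreases. *)
Definition improving_3swap (s s' : schedule) : bool :=
  [exists S : {set J}, [&& #|S| == 3, s' == swap s S & makespan s' < makespan s]].

Definition three_swap_optimal (s : schedule) : Prop :=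
  forall S : {set J}, #|S| = 3 -> makespan s <= makespan (swap s S).
End P2.

From mathcomp Require Import all_boot zify.
Set Implicit Arguments. Unset Strict Implicit. Unset Printing Implicit Defensive.

(* Give job i < m the weight 2^i and job m the weight 2^m, which outweighs all
   the others together.  As long as job m sits on machine 1, that machine is
   critical and the makespan is 2^m plus the binary number whose bits are the
   small jobs on machine 1; removing job t from machine 1 while toggling two
   jobs a, b < t is then an improving 3-swap, and a schedule with job m alone
   is optimal.  The run [moves k] leads from the bits {k+3, k+2} to the empty
   counter: for k+2 it clears k+4 and sets k+3, k+2, runs [moves k] under the
   untouched bit k+5, clears k+5 and sets k+4, k+3, and finishes with
   [moves (k+1)].  Its length grows like a Fibonacci sequence, hence at least
   2^(k/2); with m = 3n and k = 3n - 4 this exceeds 2^n. *)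

Lemma last_scanl (T S : Type) (f : T -> S -> T) x s : last x (scanl f x s) = foldl f x s.
Proof. by elim: s x => [|y s IH] x //=. Qed.

Lemma sum_pow2_lt k : \sum_(i < k) 2 ^ i < 2 ^ k.
Proof.
elim: k => [|k IH]; first by rewrite big_ord0.
by rewrite big_ord_recr /= expnS; move: IH; set x := \sum_(i < k) _; lia.
Qed.

Lemma pow2_add_lt a b t : b < a -> a < t -> 2 ^ a + 2 ^ b < 2 ^ t.
Proof.
move=> ba a_t; have : 2 ^ b < 2 ^ a by rewrite ltn_exp2l.
have : 2 ^ a.+1 <= 2 ^ t by rewrite leq_exp2l.
rewrite expnS; lia.
Qed.

Section DominantJob.
Variables (J : finType) (p : J -> nat) (j0 : J).
Hypothesis dominant : \sum_(j | j != j0) p j <= p j0.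

Definition lonely : schedule J := [ffun j => j == j0].

Lemma load_cond (s : schedule J) b : load p s b = \sum_j (if s j == b then p j else 0).
Proof. exact: big_mkcond. Qed.

Lemma weight_le_makespan (s : schedule J) j : p j <= makespan p s.
Proof.
rewrite /makespan; apply: leq_trans (_ : load p s (s j) <= _).
  by rewrite /load (bigD1 j) //= leq_addr.
by case: (s j); rewrite ?leq_maxl ?leq_maxr.
Qed.

Lemma load_le_dominant (s : schedule J) b : s j0 != b -> load p s b <= p j0.
Proof.
move=> sj0; apply: leq_trans dominant.
rewrite load_cond [leqRHS]big_mkcond leq_sum // => j _.
by case: (j =P j0) => [->|_] /=; [rewrite (negbTE sj0) | case: ifP].
Qed.

Lemma makespan_dominant (s : schedule J) : s j0 -> makespan p s = load p s true.
Proof.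
move=> sj0; apply/maxn_idPl; apply: (@leq_trans (p j0)).
  by apply: load_le_dominant; rewrite sj0.
by rewrite /load (bigD1 j0) ?sj0 //= leq_addr.
Qed.

Lemma three_swap_optimal_lonely : three_swap_optimal p lonely.
Proof.
move=> S _; apply: leq_trans (weight_le_makespan _ j0).
by rewrite makespan_dominant ?ffunE // /load (big_pred1 j0) // => j; rewrite ffunE.
Qed.

Lemma improving_3swap_dominant (s : schedule J) t a b :
  uniq [:: j0; t; a; b] -> s j0 -> s t -> p a + p b < p t ->
  improving_3swap p s (swap s [set t; a; b]).
Proof.
rewrite /= !inE !negb_or andbT => /and3P[/and3P[j0t j0a j0b] /andP[ta tb] ab].
move=> sj0 st pabt; apply/existsP; exists [set t; a; b]; rewrite eqxx /=.
have card3 : #|[set t; a; b]| = 3.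
  by rewrite -setUA cardsU1 cards2 !inE negb_or ta tb ab.
rewrite card3 /=.
have sj0' : swap s [set t; a; b] j0.
  by rewrite ffunE !inE (negbTE j0t) (negbTE j0a) (negbTE j0b).
rewrite !makespan_dominant // !load_cond.
have pointwise j : (if swap s [set t; a; b] j == true then p j else 0) +
                   (if j == t then p t else 0)
                   <= (if s j == true then p j else 0) +
                      ((if j == a then p a else 0) + (if j == b then p b else 0)).
  rewrite ffunE !inE.
  case: (j =P t) => [->|_] /=; first by rewrite (negbTE ta) (negbTE tb) st /=; lia.
  case: (j =P a) => [->|_] /=; first by rewrite (negbTE ab); case: (s a) => /=; lia.
  by case: (j =P b) => [->|_] /=; case: (s _) => /=; lia.
have := @leq_sum J (index_enum J) xpredT _ _ (fun j _ => pointwise j).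
rewrite !big_split /= -!big_mkcond /= !big_pred1_eq; lia.
Qed.

End DominantJob.

Definition move_below (i : nat) (x : nat * nat * nat) : bool := let: (t, _, _) := x in t < i.

Fixpoint moves k : seq (nat * nat * nat) :=
  match k with
  | 0 => [:: (3, 1, 0); (2, 1, 0)]
  | 1 => [:: (4, 1, 0); (3, 1, 0)]
  | (k.+1 as k1).+1 =>
      (k + 4, k + 3, k + 2) :: moves k ++ (k + 5, k + 4, k + 3) :: moves k1
  end.
Arguments moves : simpl nomatch.

Lemma moves_rec k :
  moves k.+2 = (k + 4, k + 3, k + 2) :: moves k ++ (k + 5, k + 4, k + 3) :: moves k.+1.
Proof. by []. Qed.

Lemma moves_below k i : k + 4 <= i -> all (move_below i) (moves k).
Proof.
by elim/ltn_ind: k i => -[|[|k]] IH i ki; rewrite ?moves_rec /= ?all_cat /= ?IH //; lia.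
Qed.

Lemma moves_long k : 2 ^ (k %/ 2) <= size (moves k).
Proof.
elim/ltn_ind: k => -[|[|k]] IH //.
rewrite moves_rec /= size_cat /=.
have := IH k (leqnSn _); have := IH k.+1 (ltnSn _).
have -> : k.+2 %/ 2 = (k %/ 2).+1 by lia.
have : 2 ^ (k %/ 2) <= 2 ^ (k.+1 %/ 2) by rewrite leq_exp2l //; lia.
rewrite expnS; lia.
Qed.

Ltac decide_nat_eqs := rewrite /= ?inE; repeat (case: eqP => ?); rewrite /=; lia.

Section PowersOfTwo.
Variable m : nat.

Definition pow2 (j : 'I_m.+1) : nat := 2 ^ j.

Lemma pow2_dominant : \sum_(j | j != ord_max) pow2 j <= pow2 ord_max.
Proof. by rewrite /pow2; have := sum_pow2_lt m.+1; rewrite (bigD1 ord_max) //= expnS; lia. Qed.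

Definition move_set (x : nat * nat * nat) : {set 'I_m.+1} :=
  let: (t, a, b) := x in [set inord t; inord a; inord b].

Definition apply_move (s : schedule 'I_m.+1) (x : nat * nat * nat) := swap s (move_set x).

Definition valid_move (s : schedule 'I_m.+1) (x : nat * nat * nat) : bool :=
  let: (t, a, b) := x in [&& b < a, a < t, t < m & s (inord t)].

Fixpoint valid_run (s : schedule 'I_m.+1) (ms : seq (nat * nat * nat)) : bool :=
  if ms is x :: ms' then valid_move s x && valid_run (apply_move s x) ms' else true.

Lemma mem_move_set j t a b : b < a < t -> t <= m ->
  (j \in move_set (t, a, b)) = [|| j == t :> nat, j == a :> nat | j == b :> nat].
Proof. by move=> /andP[ba a_t] tm; rewrite !inE -!val_eqE /= !inordK //; lia. Qed.

Lemma valid_run_cat (s : schedule 'I_m.+1) ms1 ms2 :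
  valid_run s (ms1 ++ ms2) = valid_run s ms1 && valid_run (foldl apply_move s ms1) ms2.
Proof. by elim: ms1 s => [|x ms1 IH] s //=; rewrite IH andbA. Qed.

Lemma path_valid_run (s : schedule 'I_m.+1) ms : s ord_max -> valid_run s ms ->
  path (improving_3swap pow2) s (scanl apply_move s ms).
Proof.
elim: ms s => [|[[t a] b] ms IH] s //= smax /andP[/and4P[ba a_t tm st] run].
have tab : b < a < t by rewrite ba a_t.
have improving : improving_3swap pow2 s (apply_move s (t, a, b)).
  apply: (improving_3swap_dominant pow2_dominant) => //.
    by rewrite /= !inE -!val_eqE /= !inordK //; lia.
  by rewrite /pow2 !inordK ?pow2_add_lt //; lia.
rewrite improving /=.
apply: IH run; rewrite ffunE mem_move_set ?smax //=; last exact: ltnW.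
by case: ifP => //; lia.
Qed.

Definition add_job (s : schedule 'I_m.+1) (i : nat) : schedule 'I_m.+1 :=
  [ffun j : 'I_m.+1 => (j == i :> nat) || s j].

Lemma swap_add_job (s : schedule 'I_m.+1) i (S : {set 'I_m.+1}) :
  (forall j, j \in S -> j != i :> nat) ->
  swap (add_job s i) S = add_job (swap s S) i.
Proof.
move=> Si; apply/ffunP => j; rewrite !ffunE.
by case: ifP => // /Si /negbTE ->.
Qed.

Lemma valid_run_add_job (s : schedule 'I_m.+1) i ms :
  all (move_below i) ms -> valid_run s ms ->
  valid_run (add_job s i) ms /\
  foldl apply_move (add_job s i) ms = add_job (foldl apply_move s ms) i.
Proof.
elim: ms s => [|[[t a] b] ms IH] s //= /andP[ti ms_i] /andP[/and4P[ba a_t tm st] run].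
have -> : apply_move (add_job s i) (t, a, b) = add_job (apply_move s (t, a, b)) i.
  apply: swap_add_job => j; rewrite mem_move_set ?ba //; last exact: ltnW.
  by case/or3P => /eqP ->; lia.
by rewrite ffunE st orbT ba a_t tm; apply: IH.
Qed.

Definition sched_of (P : pred nat) : schedule 'I_m.+1 := [ffun j : 'I_m.+1 => P j].

Lemma eq_sched_of P Q : (forall v, v <= m -> P v = Q v) -> sched_of P = sched_of Q.
Proof. by move=> PQ; apply/ffunP => j; rewrite !ffunE PQ // -ltnS. Qed.

Lemma lonely_max : lonely ord_max = sched_of (pred1 m).
Proof. by apply/ffunP => j; rewrite !ffunE -val_eqE. Qed.

Lemma sched_of_inord P v : v <= m -> sched_of P (inord v) = P v.
Proof. by move=> vm; rewrite ffunE inordK. Qed.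

Lemma apply_move_sched_of P t a b : b < a < t -> t <= m ->
  apply_move (sched_of P) (t, a, b) =
  sched_of [pred v | if v \in [:: t; a; b] then ~~ P v else P v].
Proof.
by move=> tab tm; apply/ffunP => j; rewrite !ffunE mem_move_set // !inE.
Qed.

Lemma add_job_sched_of P i : add_job (sched_of P) i = sched_of [pred v | (v == i) || P v].
Proof. by apply/ffunP => j; rewrite !ffunE. Qed.

Definition start k := sched_of [pred v | [|| v == m, v == k + 3 | v == k + 2]].

Lemma run_base k : k + 4 <= m ->
  let ms := [:: (k + 3, 1, 0); (k + 2, 1, 0)] in
  valid_run (start k) ms /\ foldl apply_move (start k) ms = lonely ord_max.
Proof.
move=> km /=; rewrite /start !apply_move_sched_of ?lonely_max; try lia.
split; first by rewrite !sched_of_inord; [decide_nat_eqs | lia..].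
by apply: eq_sched_of => v vm; decide_nat_eqs.
Qed.

Lemma run_moves k : k + 4 <= m ->
  valid_run (start k) (moves k) /\ foldl apply_move (start k) (moves k) = lonely ord_max.
Proof.
elim/ltn_ind: k => -[|[|k]] IH km; try exact: run_base.
have descend : apply_move (start k.+2) (k + 4, k + 3, k + 2) = add_job (start k) (k + 5).
  rewrite /start apply_move_sched_of ?add_job_sched_of; try lia.
  by apply: eq_sched_of => v vm; decide_nat_eqs.
have ascend :
    apply_move (add_job (lonely ord_max) (k + 5)) (k + 5, k + 4, k + 3) = start k.+1.
  rewrite /start lonely_max add_job_sched_of apply_move_sched_of; try lia.
  by apply: eq_sched_of => v vm; decide_nat_eqs.
have [run_k end_k] := IH k (leqnSn _) ltac:(lia).
have [run_k1 end_k1] := IH k.+1 (ltnSn _) ltac:(lia).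
have [run_k5 end_k5] := valid_run_add_job (@moves_below k (k + 5) ltac:(lia)) run_k.
rewrite moves_rec /= valid_run_cat foldl_cat /= descend end_k5 end_k ascend.
rewrite run_k5 run_k1 end_k1.
split=> //; rewrite /start sched_of_inord ?ffunE ?inordK ?eqxx /=; lia.
Qed.

End PowersOfTwo.

Theorem theorem5 :
  exists c N : nat, 0 < c /\
    forall n : nat, N <= n ->
      exists (p : 'I_(3 * n + 1) -> nat) (s0 : schedule 'I_(3 * n + 1))
             (ss : seq (schedule 'I_(3 * n + 1))),
        [/\ forall j, 0 < p j,
            path (improving_3swap p) s0 ss,
            2 ^ (n %/ c) <= size ss
          & three_swap_optimal p (last s0 ss)].
Proof.
exists 1, 4; split=> // n n_ge4; rewrite addn1.
pose k := 3 * n - 4.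
have [run final] := @run_moves (3 * n) k ltac:(lia).
exists (@pow2 (3 * n)), (start (3 * n) k), (scanl (@apply_move _) (start _ k) (moves k)).
split.
- by move=> j; rewrite expn_gt0.
- by apply: path_valid_run run; rewrite ffunE /= eqxx.
- rewrite size_scanl divn1; apply: leq_trans (moves_long k); rewrite leq_exp2l //; lia.
- by rewrite last_scanl final; apply/three_swap_optimal_lonely/pow2_dominant.
Qed.
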